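(* Let $(X,\Psi)$ be a $\sigma$-compact uniform space and $Y\subseteq X$. The following are equivalent: (1) $(X,\Psi)$ satisfies $\textsf{S}_1(\mathcal{O}_\Psi,\mathcal{O}_Y)$; (2) $(X,\Psi)$ satisfies $\textsf{S}_1(\mathcal{O},\mathcal{O}_Y)$; (3) ONE has no winning strategy in the game ${\sf G}_1(\mathcal{O},\mathcal{O}_Y)$; (4) ONE has no winning strategy in the game ${\sf G}_1(\mathcal{O}_\Psi,\mathcal{O}_Y)$.
   Context: A uniformity on $X$ is a filter $\Psi$ on $X\times X$ whose members contain the diagonal $\Delta_X$, closed under $U\mapsto U^{-1}$, such that for each $U\in\Psi$ there is $V\in\Psi$ with $V\circ V\subseteq U$, and with $\bigcap\Psi=\Delta_X$. $U(x)=\{y:(x,y)\in U\}$; $X$ has the topology with neighbourhood bases $\{U(x):U\in\Psi\}$. $\sigma$-compact: countable union of compact subsets. $\mathcal{O}$: open covers of $X$. For $N\in\Psi$, $\mathcal{O}(N)=\{\mathrm{Int}(N(x)):x\in X\}$, $\mathcal{O}_\Psi=\{\mathcal{O}(N):N\in\Psi\}$. $\mathcal{O}_Y$: families of open subsets of $X$ whose union contains $Y$. $\textsf{S}_1(\mathcal{A},\mathcal{B})$: for every sequence $(O_n)$ of elements of $\mathcal{A}$ there are $T_n\in O_n$ with $\{T_n:n\in\mathbb{N}\}\in\mathcal{B}$. Game ${\sf G}_1(\mathcal{A},\mathcal{B})$: in inning $n$ ONE chooses $O_n\in\mathcal{A}$, TWO responds with $T_n\in O_n$; TWO wins if $\{T_n:n\in\mathbb{N}\}\in\mathcal{B}$,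 else ONE wins. *)

From Stdlib Require List.
From mathcomp Require Import all_boot.
From mathcomp Require Export classical_sets.
Set Implicit Arguments. Unset Strict Implicit. Unset Printing Implicit Defensive.
Local Open Scope classical_set_scope.

Section Uniform.
Variable X : Type.
Implicit Types (Psi : set (set (X * X))) (U V N : set (X * X)) (A B : set X).

Definition is_uniformity Psi : Prop :=
  Psi setT /\
  (forall U V, Psi U -> Psi V -> Psi (setI U V)) /\
  (forall U V, Psi U -> U `<=` V -> Psi V) /\
  (forall U, Psi U -> forall x, U (x, x)) /\
  (forall U, Psi U -> Psi [set p | U (p.2, p.1)]) /\
  (forall U, Psi U -> exists2 V, Psi V &
      (forall x y z, V (x, y) -> V (y, z) -> U (x, z))) /\
  (forall x y, (forall U, Psi U -> U (x, y)) -> x = y).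

Definition entsec U (x : X) : set X := [set y | U (x, y)].

Definition uopen Psi A : Prop :=
  forall x, A x -> exists2 U, Psi U & entsec U x `<=` A.

Definition uint Psi A : set X :=
  [set x | exists B, [/\ uopen Psi B, B `<=` A & B x]].

Definition ucompact Psi (K : set X) : Prop :=
  forall F : set (set X), (forall G, F G -> uopen Psi G) ->
    (forall x, K x -> exists2 G, F G & G x) ->
    exists s : seq (set X), (forall G, List.In G s -> F G) /\
      (forall x, K x -> exists2 G, List.In G s & G x).

Definition sigma_compact Psi : Prop :=
  exists K : nat -> set X, (forall n, ucompact Psi (K n)) /\
    (forall x, exists n, K n x).

Definition OpenCovers Psi : set (set (set X)) :=
  [set F | (forall G, F G -> uopen Psi G) /\ (forall x, exists2 G, F G & G x)].

Definition OpenCoversOf Psi (Y : set X) : set (set (set X)) :=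
  [set F | (forall G, F G -> uopen Psi G) /\ (forall x, Y x -> exists2 G, F G & G x)].

Definition OofN Psi N : set (set X) := [set G | exists x, G = uint Psi (entsec N x)].

Definition OPsi Psi : set (set (set X)) := [set F | exists2 N, Psi N & F = OofN Psi N].

Definition S1 (AA BB : set (set (set X))) : Prop :=
  forall O : nat -> set (set X), (forall n, AA (O n)) ->
    exists T : nat -> set X, (forall n, O n (T n)) /\ BB (range T).

(* A strategy for ONE in G_1(A,B): given TWO's previous moves, choose an element of A.
   It is winning if every play following it is lost by TWO. *)
Definition ONE_winning_strategy (AA BB : set (set (set X)))
    (sigma : seq (set X) -> set (set X)) : Prop :=
  (forall h, AA (sigma h)) /\
  (forall T : nat -> set X,
      (forall n, sigma [seq T i | i <- iota 0 n] (T n)) -> ~ BB (range T)).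

Definition ONE_has_winning_strategy (AA BB : set (set (set X))) : Prop :=
  exists sigma, ONE_winning_strategy AA BB sigma.

End Uniform.

(* Write X as an increasing union of compact sets C n.  For a strategy sigma of
   ONE and a history h, the Lebesgue covering lemma for the cover sigma h of
   C (size h) gives an entourage V h and a finite menu of members of sigma h
   such that every V h-small set meeting C (size h) lies in a menu item.  If TWO
   always answers from the menu, only finitely many histories of length n can
   occur, so the intersection N n of their V h is an entourage.  Applying
   S_1(O_Psi, O_Y) to infinitely many disjoint subsequences of (O(N n))_n (via
   a pairing nat * nat -> nat) yields T n in O(N n) such that every point of Y
   lies in T n for arbitrarily large n.  At move n TWO answers with a menu item
   containing the intersection of T n and C n whenever there is one; a point of
   Y lying in C m and in T n with m <= n is then covered by that answer, so
   sigma is not winning.  The remaining implications are formal: O_Psi is a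
   subfamily of O, and the strategy that ignores TWO's moves wins whenever
   S_1 fails. *)

From mathcomp Require Import all_boot classical_sets boolp.
From Stdlib Require Import Cantor.
Local Open Scope classical_set_scope.
Set Implicit Arguments.

Lemma seq_lift A B (P : set B) (f : B -> A) (s : seq A) :
  (forall a, List.In a s -> exists2 b, P b & a = f b) ->
  exists2 t : seq B, (forall b, List.In b t -> P b) & s = map f t.
Proof.
elim: s => [|a s IH] Ps; first by exists [::].
have [b Pb ->] := Ps a (or_introl erefl).
have [t Pt ->] := IH (fun a' sa' => Ps a' (or_intror sa')).
by exists (b :: t) => // b' [<-|/Pt].
Qed.

Section Uniformity.
Variables (X : Type) (Psi : set (set (X * X))).
Hypothesis Psi_unif : is_uniformity Psi.

Lemma entourageT : Psi setT.
Proof. by case: Psi_unif. Qed.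

Lemma entourageI U V : Psi U -> Psi V -> Psi (U `&` V).
Proof. by case: Psi_unif => _ [+ _]; apply. Qed.

Lemma entourageS U V : Psi U -> U `<=` V -> Psi V.
Proof. by case: Psi_unif => _ [_ [+ _]]; apply. Qed.

Lemma entourage_refl U x : Psi U -> U (x, x).
Proof. by case: Psi_unif => _ [_ [_ [+ _]]] => /[apply]; apply. Qed.

Lemma entourage_inv U : Psi U -> Psi [set p | U (p.2, p.1)].
Proof. by case: Psi_unif => _ [_ [_ [_ [+ _]]]]; apply. Qed.

Lemma entourage_split U : Psi U ->
  exists2 V, Psi V & forall x y z, V (x, y) -> V (y, z) -> U (x, z).
Proof. by case: Psi_unif => _ [_ [_ [_ [_ [+ _]]]]]; apply. Qed.

Lemma entourage_split3 U : Psi U ->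
  exists2 V, Psi V & forall a b c d, V (a, b) -> V (b, c) -> V (c, d) -> U (a, d).
Proof.
move=> /entourage_split [W PW WU]; have [V PV VW] := entourage_split PW.
exists V => // a b c d ab bc cd; apply: (WU a c d); first exact: (VW a b c).
by apply: (VW c d d) => //; apply: entourage_refl.
Qed.

Lemma entourage_finite_cap I (s : seq I) (f : I -> set (X * X)) :
  (forall i, List.In i s -> Psi (f i)) ->
  Psi [set p | forall i, List.In i s -> f i p].
Proof.
elim: s => [_|i s IH Pf]; first by apply: entourageS entourageT _ => p _ i [].
apply: entourageS (entourageI (Pf i (or_introl erefl)) (IH _)) _.
  by move=> j sj; apply: Pf; right.
by move=> p [fip sp] j [<-|/sp].
Qed.

Lemma uintP A x : uint Psi A x <-> exists2 U, Psi U & entsec U x `<=` A.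
Proof.
split=> [[B [oB BA Bx]]|[U PU UA]].
  by have [U PU UB] := oB x Bx; exists U => // y /UB /BA.
exists [set y | exists2 V, Psi V & entsec V y `<=` A]; split.
- move=> y [V PV VA]; have [W PW WV] := entourage_split PV.
  by exists W => // y' Wyy'; exists W => // z Wy'z; apply/VA/(WV y y' z).
- by move=> y [V PV VA]; apply: VA; apply: entourage_refl.
- by exists U.
Qed.

Lemma uint_open A : uopen Psi (uint Psi A).
Proof.
move=> x [B [oB BA Bx]]; have [U PU UB] := oB x Bx.
by exists U => // y /UB By; exists B.
Qed.

Lemma uint_sub A : uint Psi A `<=` A.
Proof. by move=> x [B [_ BA Bx]]; apply: BA. Qed.

Lemma uint_entsec U x : Psi U -> uint Psi (entsec U x) x.
Proof. by move=> PU; apply/uintP; exists U. Qed.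

Lemma OPsi_sub_OpenCovers : OPsi Psi `<=` OpenCovers Psi.
Proof.
move=> F [N PN ->]; split; first by move=> G [x ->]; apply: uint_open.
by move=> x; exists (uint Psi (entsec N x)); [exists x | apply: uint_entsec].
Qed.

Lemma ucompactU K K' :
  ucompact Psi K -> ucompact Psi K' -> ucompact Psi (K `|` K').
Proof.
move=> cK cK' F oF cov.
have [s [sF scov]] := cK F oF (fun x Kx => cov x (or_introl Kx)).
have [s' [sF' scov']] := cK' F oF (fun x Kx => cov x (or_intror Kx)).
exists (s ++ s'); split.
  by move=> G /(List.in_app_or s s' G) [/sF|/sF'].
move=> x [/scov|/scov'] [G sG Gx]; exists G => //.
  by apply: List.in_or_app; left.
by apply: List.in_or_app; right.
Qed.

Lemma ucompact_partial_union (K : nat -> set X) n :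
  (forall i, ucompact Psi (K i)) ->
  ucompact Psi [set x | exists2 i, (i <= n)%N & K i x].
Proof.
move=> cK; elim: n => [|n IH].
  have -> : [set x | exists2 i, (i <= 0)%N & K i x] = K 0.
    by apply/seteqP; split=> [x [[|//] _ //]|x K0x]; exists 0.
  exact: cK.
have -> : [set x | exists2 i, (i <= n.+1)%N & K i x] =
    [set x | exists2 i, (i <= n)%N & K i x] `|` K n.+1.
  apply/seteqP; split=> [x [i]|x [[i lein Kix]|Kx]].
  - by rewrite leq_eqVlt ltnS => /orP[/eqP-> Kx|lein Kix]; [right|left; exists i].
  - by exists i => //; apply: leqW.
  - by exists n.+1.
exact: ucompactU.
Qed.

Lemma sigma_compact_increasing : sigma_compact Psi ->
  exists C : nat -> set X, [/\ forall n, ucompact Psi (C n),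
    forall m n, (m <= n)%N -> C m `<=` C n & forall x, exists n, C n x].
Proof.
move=> [K [cK covK]]; exists (fun n => [set x | exists2 i, (i <= n)%N & K i x]).
split=> [n|m n mn x [i im Kix]|x]; first exact: ucompact_partial_union.
  by exists i => //; apply: leq_trans mn.
by have [n Knx] := covK x; exists n, n.
Qed.

Lemma ucompact_entsec_subcover (C : set X) (U : X -> set (X * X)) :
  ucompact Psi C -> (forall z, C z -> Psi (U z)) ->
  exists zs : seq X, (forall z, List.In z zs -> C z) /\
    (forall x, C x -> exists2 z, List.In z zs & entsec (U z) z x).
Proof.
move=> cC PU; pose nbhd z := uint Psi (entsec (U z) z).
have [D [z _ ->]|z Cz|s [sF scov]] := cC [set D | exists2 z, C z & D = nbhd z].
- exact: uint_open.
- by exists (nbhd z); [exists z | apply: uint_entsec; apply: PU].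
have [D /sF [z Cz ->]|zs zsC sE] := @seq_lift _ _ C nbhd s.
  by exists z.
exists zs; split=> // x /scov [D]; rewrite sE => /List.in_map_iff [z [<- zsz]].
by move=> /uint_sub; exists z.
Qed.

Lemma ucompact_lebesgue (C : set X) (A : set (set X)) :
  ucompact Psi C -> (forall G, A G -> uopen Psi G) ->
  (forall z, C z -> exists2 G, A G & G z) ->
  exists V (L : seq (set X)), [/\ Psi V, forall G, List.In G L -> A G &
    forall z x, C z -> V (x, z) -> exists2 G, List.In G L & entsec V x `<=` G].
Proof.
move=> cC oA covA.
have /choice [GW GWP] : forall z, exists p : set X * set (X * X), C z ->
    [/\ A p.1, Psi p.2 & forall a b c, p.2 (z, a) -> p.2 (a, b) -> p.2 (b, c) -> p.1 c].
  move=> z; have [Cz|nCz] := pselect (C z); last by exists (setT, setT) => /nCz.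
  have [G AG Gz] := covA z Cz; have [U PU UG] := oA G AG z Gz.
  have [W PW WU] := entourage_split3 PU.
  by exists (G, W) => _; split=> // a b c za ab bc; apply: UG; apply: (WU z a b c).
have [zs [zsC zscov]] := @ucompact_entsec_subcover C (fun z => (GW z).2) cC
  (fun z Cz => let: And3 _ PW _ := GWP z Cz in PW).
exists [set p | forall z, List.In z zs -> (GW z).2 p /\ (GW z).2 (p.2, p.1)].
exists (map (fun z => (GW z).1) zs); split.
- apply: entourage_finite_cap => z /zsC /GWP [_ PW _].
  exact: entourageI PW (entourage_inv PW).
- by move=> G /List.in_map_iff [z [<- /zsC /GWP []]].
move=> z' x Cz' Vxz'; have [z zsz Wzz'] := zscov z' Cz'.
exists (GW z).1; first exact: (List.in_map (fun z => (GW z).1)).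
move=> y Vxy; have [_ _ W3] := GWP z (zsC z zsz).
by apply: (W3 z' x) => //; [apply: (Vxz' z zsz).2 | apply: (Vxy z zsz).1].
Qed.

Lemma strategy_menus (C : nat -> set X) (sigma : seq (set X) -> set (set X)) (x0 : X) :
  (forall n, ucompact Psi (C n)) -> (forall h, OpenCovers Psi (sigma h)) ->
  exists (menu : seq (set X) -> seq (set X)) (V : seq (set X) -> set (X * X)),
  [/\ forall h, Psi (V h), forall h, exists G, List.In G (menu h),
    forall h G, List.In G (menu h) -> sigma h G &
    forall h z x, C (size h) z -> V h (x, z) ->
      exists2 G, List.In G (menu h) & entsec (V h) x `<=` G].
Proof.
move=> cC sigma_cov.
have /choice [VL VLP] : forall h, exists p : set (X * X) * seq (set X),
    [/\ Psi p.1, exists G, List.In G p.2, forall G, List.In G p.2 -> sigma h G &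
    forall z x, C (size h) z -> p.1 (x, z) ->
      exists2 G, List.In G p.2 & entsec p.1 x `<=` G].
  move=> h; have [oS covS] := sigma_cov h; have [G0 SG0 _] := covS x0.
  have [V [L [PV LS VL]]] :=
    @ucompact_lebesgue _ _ (cC (size h)) oS (fun z _ => covS z).
  exists (V, G0 :: L); split=> //=; first by exists G0; left.
    by move=> G [<-|/LS].
  by move=> z x Cz /(VL z x Cz) [G LG VG]; exists G; [right|].
by exists (fun h => (VL h).2), (fun h => (VL h).1); split=> h; have [] := VLP h.
Qed.
End Uniformity.

Section Plays.
Variable A : Type.

Fixpoint history (reply : nat -> seq A -> A) n : seq A :=
  if n is m.+1 then rcons (history reply m) (reply m (history reply m)) else [::].

Lemma historyE reply n :
  history reply n = [seq reply i (history reply i) | i <- iota 0 n].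
Proof. by elim: n => // n IH; rewrite [LHS]/= -addn1 iotaD map_cat -IH cats1. Qed.

Lemma size_history reply n : size (history reply n) = n.
Proof. by elim: n => //= n IH; rewrite size_rcons IH. Qed.

Fixpoint level (menu : seq A -> seq A) n : seq (seq A) :=
  if n is m.+1 then List.flat_map (fun h => map (rcons h) (menu h)) (level menu m)
  else [:: [::]].

Lemma history_in_level menu reply :
  (forall n h, List.In (reply n h) (menu h)) ->
  forall n, List.In (history reply n) (level menu n).
Proof.
move=> reply_menu; elim=> [|n IH] /=; first by left.
by apply/List.in_flat_map; exists (history reply n); split; last exact: List.in_map.
Qed.

Definition level_cap B (menu : seq A -> seq A) (V : seq A -> set B) n : set B :=
  [set p | forall h, List.In h (level menu n) -> V h p].

Lemma exists_In_best (s : seq A) (P : A -> Prop) : (exists a, List.In a s) ->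
  exists a, List.In a s /\ ((exists2 b, List.In b s & P b) -> P a).
Proof.
move=> [a sa]; have [[b sb Pb]|noP] := pselect (exists2 b, List.In b s & P b).
  by exists b.
by exists a.
Qed.
End Plays.

Lemma S1_of_no_winning_strategy X (AA BB : set (set (set X))) :
  ~ ONE_has_winning_strategy AA BB -> S1 AA BB.
Proof.
move=> noWin O AO; apply: contrapT => noSel; apply: noWin.
exists (fun h => O (size h)); split=> // T TO BT; apply: noSel.
by exists T; split=> // n; move: (TO n); rewrite size_map size_iota.
Qed.

Lemma S1_sub X (AA AA' BB : set (set (set X))) :
  AA' `<=` AA -> S1 AA BB -> S1 AA' BB.
Proof. by move=> sub sel O AO; apply: sel => n; apply: sub. Qed.

Lemma ONE_has_winning_strategy_sub X (AA AA' BB : set (set (set X))) :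
  AA' `<=` AA -> ONE_has_winning_strategy AA' BB -> ONE_has_winning_strategy AA BB.
Proof. by move=> sub [sigma [sigmaA win]]; exists sigma; split=> // h; apply: sub. Qed.

Lemma S1_covers_infinitely_often X (AA : set (set (set X))) Psi (Y : set X) :
  S1 AA (OpenCoversOf Psi Y) -> forall O : nat -> set (set X), (forall n, AA (O n)) ->
  exists T : nat -> set X, (forall n, O n (T n)) /\
    (forall y, Y y -> forall m, exists2 n, (m <= n)%N & T n y).
Proof.
move=> sel O AO.
have /choice [TT TTP] : forall j, exists T : nat -> set X,
    (forall i, O (Cantor.to_nat (j, i)) (T i)) /\ OpenCoversOf Psi Y (range T).
  by move=> j; apply: (sel (fun i => O (Cantor.to_nat (j, i)))).
exists (fun n => TT (Cantor.of_nat n).1 (Cantor.of_nat n).2); split.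
  move=> n; rewrite -{1}[n]Cantor.cancel_to_of.
  by case: (Cantor.of_nat n) => j i; apply: (TTP j).1.
move=> y Yy m; have [_ [i _ <-] Ty] := (TTP m).2.2 y Yy.
exists (Cantor.to_nat (m, i)); last by rewrite Cantor.cancel_of_to.
by apply: leq_trans (leq_addl i m) _; apply/leP; apply: Cantor.to_nat_non_decreasing.
Qed.

Section Counterplay.
Variables (X : Type) (Psi : set (set (X * X))) (Y : set X) (C : nat -> set X).
Hypothesis C_mono : forall {m n}, (m <= n)%N -> C m `<=` C n.
Hypothesis C_cover : forall x, exists n, C n x.
Variables (menu : seq (set X) -> seq (set X)) (V : seq (set X) -> set (X * X)).
Hypothesis menu_nonempty : forall h, exists G, List.In G (menu h).
Hypothesis menu_lebesgue : forall h z x, C (size h) z -> V h (x, z) ->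
  exists2 G, List.In G (menu h) & entsec (V h) x `<=` G.
Variable T : nat -> set X.
Hypothesis T_OofN : forall n, OofN Psi (level_cap menu V n) (T n).
Hypothesis T_cover : forall y, Y y -> forall m, exists2 n, (m <= n)%N & T n y.

Lemma counterplay : exists reply : nat -> seq (set X) -> set X,
  (forall n h, List.In (reply n h) (menu h)) /\
  (forall y, Y y -> exists n, reply n (history reply n) y).
Proof.
have /choice [r rP] : forall nh : nat * seq (set X), exists G, List.In G (menu nh.2) /\
    ((exists2 G', List.In G' (menu nh.2) & T nh.1 `&` C nh.1 `<=` G') ->
     T nh.1 `&` C nh.1 `<=` G).
  by move=> [n h]; apply: exists_In_best (menu_nonempty h).
pose reply n h := r (n, h).
have reply_menu n h : List.In (reply n h) (menu h) by have [] := rP (n, h).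
exists reply; split=> // y Yy; have [m Cmy] := C_cover y.
have [n mn Tny] := T_cover Yy m; pose h := history reply n.
have [x Tn_def] := T_OofN n.
have TnV : T n `<=` entsec (V h) x.
  move=> w; rewrite Tn_def => Tnw; apply: (uint_sub Tnw).
  exact: history_in_level reply_menu n.
have Cny : C n y := C_mono mn Cmy.
have [G menuG VG] : exists2 G, List.In G (menu h) & entsec (V h) x `<=` G.
  by apply: menu_lebesgue (TnV y Tny); rewrite size_history.
exists n; apply: (rP (n, h)).2; last by split.
by exists G => // w [/TnV /VG].
Qed.
End Counterplay.

Lemma S1_OPsi_no_winning_strategy X (Psi : set (set (X * X))) (Y : set X) :
  is_uniformity Psi -> sigma_compact Psi -> S1 (OPsi Psi) (OpenCoversOf Psi Y) ->
  ~ ONE_has_winning_strategy (OpenCovers Psi) (OpenCoversOf Psi Y).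
Proof.
move=> Psi_unif /sigma_compact_increasing [C [cC C_mono C_cover]] sel.
move=> [sigma [sigma_cov sigma_win]].
have [x0 _] : exists x : X, True.
  have [T [TO _]] :=
    sel (fun=> OofN Psi setT) (fun=> ex_intro2 _ _ _ (entourageT Psi_unif) erefl).
  by have [x _] := TO 0; exists x.
have [menu [V [PV menu_nonempty menu_sigma menu_lebesgue]]] :=
  strategy_menus Psi_unif C sigma x0 cC sigma_cov.
have [|T [TO Tcov]] :=
  S1_covers_infinitely_often sel (fun n => OofN Psi (level_cap menu V n)).
  move=> n; exists (level_cap menu V n) => //.
  by apply: (entourage_finite_cap Psi_unif) => h _; apply: PV.
have [reply [reply_menu reply_cov]] :=
  counterplay Y C C_mono C_cover menu_nonempty menu_lebesgue T TO Tcov.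
have reply_sigma n h : sigma h (reply n h) by apply/menu_sigma/reply_menu.
apply: (sigma_win (fun n => reply n (history reply n))).
  by move=> n; rewrite -historyE; apply: reply_sigma.
split=> [G [n _ <-]|y /reply_cov [n play_ny]].
  exact: (sigma_cov _).1 _ (reply_sigma n _).
by exists (reply n (history reply n)); first exists n.
Qed.

Theorem theorem2p5 (X : Type) (Psi : set (set (X * X))) (Y : set X) :
  is_uniformity Psi -> sigma_compact Psi ->
  let s1 := S1 (OPsi Psi) (OpenCoversOf Psi Y) in
  let s2 := S1 (OpenCovers Psi) (OpenCoversOf Psi Y) in
  let s3 := ~ ONE_has_winning_strategy (OpenCovers Psi) (OpenCoversOf Psi Y) in
  let s4 := ~ ONE_has_winning_strategy (OPsi Psi) (OpenCoversOf Psi Y) in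
  [/\ s1 <-> s2, s2 <-> s3 & s3 <-> s4].
Proof.
move=> Psi_unif sigma_cpt s1 s2 s3 s4.
have OPsi_sub := OPsi_sub_OpenCovers Psi_unif.
have s13 : s1 -> s3 := S1_OPsi_no_winning_strategy Psi_unif sigma_cpt.
have s32 : s3 -> s2 := @S1_of_no_winning_strategy _ _ _.
have s21 : s2 -> s1 := S1_sub OPsi_sub.
have s34 : s3 -> s4 :=
  fun noWin win => noWin (ONE_has_winning_strategy_sub OPsi_sub win).
have s41 : s4 -> s1 := @S1_of_no_winning_strategy _ _ _.
by split; split; auto.
Qed.
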